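(* Let $P(s,h)=\{p_1,\dots,p_m\}$ and $P(h,t)=\{p'_1,\dots,p'_n\}$ be skyline path sets with $p_i=(w_i,c_i)$, $p'_j=(w'_j,c'_j)$, each sorted in weight-increasing order, let $p_i^j=(w_i+w'_j,c_i+c'_j)$ and $P_c=\{p_k^l:1\le k\le m,1\le l\le n\}$. Fix $i,j$ and let $P_3=\{p_k^l: k<i,\ l>j\}$ and $P_4=\{p_k^l: k>i,\ l<j\}$. Then $p_i^j$ is a skyline path of $P_c$ (not dominated by any path of $P_c$) if and only if it is not dominated by any path in $P_3\cup P_4$.
   Context: A path with value $(w,c)$ dominates a path with value $(w',c')$ if $w\le w'$, $c\le c'$, and at least one inequality is strict. A skyline path set is a set of paths no one of which dominates another (so, in two dimensions, when sorted by increasing weight the costs are non-increasing). Concatenation adds weights and costs. *)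

From mathcomp Require Import all_boot all_order all_algebra.
Set Implicit Arguments. Unset Strict Implicit. Unset Printing Implicit Defensive.
Import Order.TTheory GRing.Theory Num.Theory.
Local Open Scope ring_scope.


Definition dominates (R : realDomainType) (p q : R * R) : bool :=
  [&& p.1 <= q.1, p.2 <= q.2 & (p.1 < q.1) || (p.2 < q.2)].

Definition concat_path (R : realDomainType) (p q : R * R) : R * R :=
  (p.1 + q.1, p.2 + q.2).

Definition skyline_sorted (R : realDomainType) (s : seq (R * R)) : Prop :=
  [/\ uniq s,
      (forall p q, p \in s -> q \in s -> ~~ dominates p q)
    & sorted (fun p q : R * R => p.1 <= q.1) s].

(* Along a skyline sorted by weight, weights strictly increase and costs
   strictly decrease with the index.  So if k <= i and l <= j with
   (k, l) <> (i, j), the cost of p_k^l strictly exceeds that of p_i^j, and if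
   k >= i and l >= j its weight does; either way p_k^l cannot dominate p_i^j.
   The index pairs left over are exactly those of P3 and P4. *)

From mathcomp Require Import all_boot all_order all_algebra.
From mathcomp Require Import zify.

Set Implicit Arguments.
Unset Strict Implicit.
Unset Printing Implicit Defensive.
Import Order.TTheory GRing.Theory Num.Theory.
Local Open Scope ring_scope.

Section Dominance.

Variable R : realDomainType.
Implicit Types p q : R * R.

Lemma dominates_irr p : ~~ dominates p p.
Proof. by rewrite /dominates !ltxx !andbF. Qed.

Lemma not_dominates_fst p q : q.1 < p.1 -> ~~ dominates p q.
Proof. by rewrite /dominates ltNge => /negPf->. Qed.

Lemma not_dominates_snd p q : q.2 < p.2 -> ~~ dominates p q.
Proof. by rewrite /dominates andbCA ltNge => /negPf->. Qed.

Lemma incomparable_le_fst p q :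
  p != q -> ~~ dominates p q -> ~~ dominates q p -> p.1 <= q.1 ->
  p.1 < q.1 /\ q.2 < p.2.
Proof.
case: p q => [a b] [c d]; rewrite /dominates xpair_eqE /= => neq ndpq ndqp ac.
have db : d < b.
  rewrite ltNge; apply: contra ndpq => bd.
  rewrite ac bd /= !lt_def ac bd !andbT -negb_and.
  by apply: contra neq => /andP[/eqP-> /eqP->]; rewrite !eqxx.
split=> //; rewrite lt_def ac andbT.
by apply: contra ndqp => /eqP->; rewrite lexx (ltW db) db orbT.
Qed.

End Dominance.

Section SortedSkyline.

Variables (R : realDomainType) (s : seq (R * R)).
Hypothesis sky : skyline_sorted s.
Local Notation p k := (nth (0, 0) s k).

Lemma skyline_nth_lt k i :
  (k < i)%N -> (i < size s)%N -> (p k).1 < (p i).1 /\ (p i).2 < (p k).2.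
Proof.
case: sky => uniq_s nodom sorted_s ki isz.
have ksz : (k < size s)%N by apply: ltn_trans isz.
apply: incomparable_le_fst.
- by rewrite nth_uniq // neq_ltn ki.
- by apply: nodom; apply: mem_nth.
- by apply: nodom; apply: mem_nth.
apply: (sorted_leq_nth (leT := fun p q : R * R => p.1 <= q.1)) => //.
- by move=> y x z /= /le_trans; apply.
- exact: ltnW.
Qed.

Lemma skyline_nth_le k i :
  (k <= i)%N -> (i < size s)%N -> (p k).1 <= (p i).1 /\ (p i).2 <= (p k).2.
Proof.
rewrite leq_eqVlt => /orP[/eqP-> | ki isz]; first by rewrite !lexx.
by have [lt1 lt2] := skyline_nth_lt ki isz; rewrite !ltW.
Qed.

End SortedSkyline.

Section Concatenation.

Variables (R : realDomainType) (s1 s2 : seq (R * R)).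
Hypotheses (sky1 : skyline_sorted s1) (sky2 : skyline_sorted s2).
Local Notation pc k l := (concat_path (nth (0, 0) s1 k) (nth (0, 0) s2 l)).

Lemma concat_nth_lt_snd k l i j :
  (k <= i)%N -> (l <= j)%N -> (i < size s1)%N -> (j < size s2)%N ->
  (k, l) != (i, j) -> (pc i j).2 < (pc k l).2.
Proof.
move=> ki lj isz jsz ne.
have [_ le1] := skyline_nth_le sky1 ki isz.
have [_ le2] := skyline_nth_le sky2 lj jsz.
have [ki' | ik] := ltnP k i; first by rewrite ltr_leD // (skyline_nth_lt sky1 ki' isz).2.
have lj' : (l < j)%N by move: ne; rewrite xpair_eqE; lia.
by rewrite ler_ltD // (skyline_nth_lt sky2 lj' jsz).2.
Qed.

Lemma concat_nth_lt_fst k l i j :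
  (i <= k)%N -> (j <= l)%N -> (k < size s1)%N -> (l < size s2)%N ->
  (k, l) != (i, j) -> (pc i j).1 < (pc k l).1.
Proof.
move=> ik jl ksz lsz ne.
have [le1 _] := skyline_nth_le sky1 ik ksz.
have [le2 _] := skyline_nth_le sky2 jl lsz.
have [ik' | ki] := ltnP i k; first by rewrite ltr_leD // (skyline_nth_lt sky1 ik' ksz).1.
have jl' : (j < l)%N by move: ne; rewrite xpair_eqE; lia.
by rewrite ler_ltD // (skyline_nth_lt sky2 jl' lsz).1.
Qed.

End Concatenation.

Theorem mainTheorem4 (R : realDomainType) (s1 s2 : seq (R * R)) (i j : nat) :
  skyline_sorted s1 -> skyline_sorted s2 ->
  (i < size s1)%N -> (j < size s2)%N ->
  let pc := fun k l => concat_path (nth (0, 0) s1 k) (nth (0, 0) s2 l) in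
  (forall k l, (k < size s1)%N -> (l < size s2)%N -> ~~ dominates (pc k l) (pc i j))
  <->
  (forall k l, (k < size s1)%N -> (l < size s2)%N ->
     (((k < i)%N /\ (j < l)%N) \/ ((i < k)%N /\ (l < j)%N)) ->
     ~~ dominates (pc k l) (pc i j)).
Proof.
move=> sky1 sky2 isz jsz pc; split=> nodom k l ksz lsz; first by move=> _; apply: nodom.
have [[-> ->] | ne] := eqVneq (k, l) (i, j); first exact: dominates_irr.
have [[ki lj] | [[ik jl] | mixed]] :
    ((k <= i)%N /\ (l <= j)%N) \/ ((i <= k)%N /\ (j <= l)%N) \/
    ((k < i)%N /\ (j < l)%N) \/ ((i < k)%N /\ (l < j)%N) by lia.
- exact/not_dominates_snd/(concat_nth_lt_snd sky1 sky2).
- exact/not_dominates_fst/(concat_nth_lt_fst sky1 sky2).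
- exact: nodom.
Qed.
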